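(* Let $G$ be a Hausdorff topological group, $Y$ a topological space with a topological partial action $\theta$ of $G$, and $X$ a nonempty compact space, with $\hat\theta$ the induced partial action on $C(X,Y)$. Then the enveloping space $Y_G$ is $G$-homeomorphic to a $G$-invariant subset $Z$ of the enveloping space $C(X,Y)_G$. Moreover, $Z$ is closed whenever $Y$ is Hausdorff.
   Context: A topological partial action of $G$ on a space $Y$ is a family $\{\theta_g\colon Y_{g^{-1}}\to Y_g\}_{g\in G}$ of homeomorphisms between open subsets with $Y_e=Y$, $\theta_e=\mathrm{id}_Y$, $\theta_{g^{-1}}=\theta_g^{-1}$, $\theta_g\circ\theta_h$ a restriction of $\theta_{gh}$. $C(X,Y)$ has the compact-open topology; $\hat\theta$ has $C(X,Y)_g=\{f: f(X)\subset Y_g\}$ and $\hat\theta_g(f)=\theta_g\circ f$. The enveloping space of a topological partial action $\theta$ on $W$ is $W_G=(G\times W)/R$ with the quotient topology, where $(g,x)R(h,y)$ iff $x\in W_{g^{-1}h}$ and $\theta_{h^{-1}g}(x)=y$; it carries the continuous global action $g\cdot[h,x]=[gh,x]$. A set is invariant if it is stable under this action. A $G$-homeomorphism between spaces with (partial) actions is a homeomorphism $f$ such that $f$ and $f^{-1}$ are $G$-maps, where a continuous map $f$ is a $G$-map if whenever $g\cdot x$ is defined, $g\cdot f(x)$ is defined and equals $f(g\cdot x)$; here $Z$ carries the restriction of the global action of $C(X,Y)_G$. *)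

From HB Require Import structures.
From mathcomp Require Import all_boot all_order all_algebra.
From mathcomp Require Import all_classical all_reals all_analysis.
Set Implicit Arguments. Unset Strict Implicit. Unset Printing Implicit Defensive.
Local Open Scope classical_set_scope.

Definition is_topological_group (G : topologicalType)
  (mul : G -> G -> G) (inv : G -> G) (one : G) : Prop :=
  [/\ forall a b c, mul a (mul b c) = mul (mul a b) c,
      forall a, mul one a = a /\ mul a one = a,
      forall a, mul (inv a) a = one /\ mul a (inv a) = one,
      continuous (fun p : G * G => mul p.1 p.2) &
      continuous inv].

(* D g is the open set Y_g; theta g is a total function on Y of which  *)
(* only the restriction to Y_{g^-1} = D (inv g) matters.               *)
Definition is_top_partial_action (G : topologicalType)
  (mul : G -> G -> G) (inv : G -> G) (one : G)
  (Y : topologicalType) (D : G -> set Y) (theta : G -> Y -> Y) : Prop :=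
  [/\ (forall g, open (D g)),
      D one = setT /\ (forall y, theta one y = y),
      (forall g y, D (inv g) y -> D g (theta g y) /\ theta (inv g) (theta g y) = y),
      (forall g h y, D (inv h) y -> D (inv g) (theta h y) ->
          D (inv (mul g h)) y /\ theta g (theta h y) = theta (mul g h) y) &
      (* each theta_g is continuous on Y_{g^-1} (so a homeomorphism onto Y_g) *)
      (forall g, {within D (inv g), continuous (theta g)})].

(* Enveloping space of a partial action on W, given by its domains     *)
(* Dom g = W_g and the graph Th k x y  <->  "theta_k(x) = y".          *)
Section Enveloping.
Variables (G W : topologicalType) (mul : G -> G -> G) (inv : G -> G).
Variables (Dom : G -> set W) (Th : G -> W -> W -> Prop).

Definition envR (p q : G * W) : Prop :=
  Dom (mul (inv p.1) q.1) p.2 /\ Th (mul (inv q.1) p.1) p.2 q.2.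

Definition envclass (p : G * W) : set (G * W) := [set q | envR p q].

Definition envelope : Type := {A : set (G * W) | exists p, A = envclass p}.

HB.instance Definition _ := gen_eqMixin envelope.
HB.instance Definition _ := gen_choiceMixin envelope.

Definition env_pi (p : G * W) : envelope := exist _ (envclass p) (ex_intro _ p erefl).

Definition env_open (U : set envelope) : Prop := open (env_pi @^-1` U).

Program Definition env_topology_mixin :=
  @isOpenTopological.Build envelope env_open _ _ _.
Next Obligation. by rewrite /env_open preimage_setT; exact: openT. Qed.
Next Obligation. by move=> ? ? ? ?; exact: openI. Qed.
Next Obligation. by move=> I f ofi; apply: bigcup_open => i _; exact: ofi. Qed.
HB.instance Definition _ := env_topology_mixin.

Definition env_repr (a : envelope) : G * W := projT1 (cid (svalP a)).

Definition env_act (g : G) (a : envelope) : envelope :=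
  env_pi (mul g (env_repr a).1, (env_repr a).2).

End Enveloping.

Definition Cfun (X Y : topologicalType) : Type :=
  set_type [set f : @compact_open X Y | continuous (f : X -> Y)].

Definition hat_dom (G X Y : topologicalType) (D : G -> set Y) (g : G) : set (Cfun X Y) :=
  [set f | forall t : X, D g (set_val f t)].
Definition hat_th (G X Y : topologicalType) (theta : G -> Y -> Y)
  (k : G) (f f' : Cfun X Y) : Prop :=
  forall t : X, set_val f' t = theta k (set_val f t).

Definition th_graph (G Y : topologicalType) (theta : G -> Y -> Y)
  (k : G) (x y : Y) : Prop := theta k x = y.

Definition G_invariant (G B : Type) (actB : G -> B -> B) (Z : set B) : Prop :=
  forall g z, Z z -> Z (actB g z).

Definition G_homeomorphic_to_subset (G : Type) (A B : topologicalType)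
  (actA : G -> A -> A) (actB : G -> B -> B) (Z : set B) : Prop :=
  exists (f : A -> B) (finv : B -> A),
    [/\ (forall a, Z (f a)) /\ (forall a, finv (f a) = a),
        (forall z, Z z -> f (finv z) = z),
        continuous f,
        {within Z, continuous finv} &
        (forall g a, f (actA g a) = actB g (f a)) /\
        (forall g z, Z z -> finv (actB g z) = actA g (finv z))].

Arguments hat_dom {G} X {Y} D g.
Arguments hat_th {G} X {Y} theta k f f'.
Arguments env_act {G W} mul inv Dom Th g a.

From HB Require Import structures.
From mathcomp Require Import all_boot all_order all_algebra.
From mathcomp Require Import all_classical all_reals all_analysis.
From Corelib Require Import Classes.RelationClasses.
Local Open Scope classical_set_scope.
Set Implicit Arguments. Unset Strict Implicit.

(* Send y to the constant function at y.  Since hat-theta acts pointwise,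
   this respects the relations defining the enveloping spaces and induces a
   continuous equivariant map Y_G -> C(X,Y)_G; evaluation at a point of X
   induces a continuous equivariant left inverse.  The image Z consists of the
   classes of the pairs (g, f) with f constant, and when Y is Hausdorff the
   non-constant functions form an open subset of C(X,Y), so Z is closed. *)

Section GroupLaws.
Variables (T : Type) (mul : T -> T -> T) (inv : T -> T) (one : T).
Hypotheses (mulA : forall a b c, mul a (mul b c) = mul (mul a b) c)
  (mul1 : forall a, mul one a = a /\ mul a one = a)
  (mulV : forall a, mul (inv a) a = one /\ mul a (inv a) = one).
Local Notation ldiv a b := (mul (inv a) b).

Lemma invK a : inv (inv a) = a.
Proof.
have e := (mul1 (inv (inv a))).2; rewrite -(mulV a).1 mulA (mulV (inv a)).1 in e.
by rewrite -e (mul1 a).1.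
Qed.

Lemma invM a b : inv (mul a b) = mul (inv b) (inv a).
Proof.
have e : mul (mul a b) (mul (inv b) (inv a)) = one.
  by rewrite -mulA (mulA b) (mulV b).2 (mul1 _).1 (mulV a).2.
by rewrite -[LHS](mul1 _).2 -e mulA (mulV _).1 (mul1 _).1.
Qed.

Lemma inv_ldiv a b : inv (ldiv a b) = ldiv b a.
Proof. by rewrite invM invK. Qed.

Lemma mul_ldiv a b c : mul (ldiv a b) (ldiv b c) = ldiv a c.
Proof. by rewrite -mulA (mulA b) (mulV b).2 (mul1 c).1. Qed.

Lemma ldiv_mul2l g a b : ldiv (mul g a) (mul g b) = ldiv a b.
Proof. by rewrite invM -mulA (mulA (inv g)) (mulV g).1 (mul1 b).1. Qed.

End GroupLaws.

Lemma G_invariant_range (G A B : Type) (actA : G -> A -> A) (actB : G -> B -> B)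
    (f : A -> B) :
  (forall g a, f (actA g a) = actB g (f a)) -> G_invariant actB (range f).
Proof. by move=> f_equi g _ [a _ <-]; exists (actA g a). Qed.

Section Envelopes.
Variables (G : topologicalType) (mul : G -> G -> G) (inv : G -> G) (one : G).
Hypotheses (mulA : forall a b c, mul a (mul b c) = mul (mul a b) c)
  (mul1 : forall a, mul one a = a /\ mul a one = a)
  (mulV : forall a, mul (inv a) a = one /\ mul a (inv a) = one).

Section PartialAction.
Variables (Y : topologicalType) (D : G -> set Y) (theta : G -> Y -> Y).
Hypothesis Htheta : is_top_partial_action mul inv one D theta.

Lemma th_envR_equiv : Equivalence (envR mul inv D (th_graph theta)).
Proof.
have [_ [D1 th1] th_inv th_mul _] := Htheta.
have ldivV := inv_ldiv mulA mul1 mulV.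
split.
- by move=> p; rewrite /envR /th_graph (mulV _).1 D1 th1.
- rewrite /envR /th_graph => p q [Dp <-]; rewrite -ldivV in Dp.
  by have [] := th_inv _ _ Dp; rewrite ldivV.
- rewrite /envR /th_graph => p q r [Dp Eq] [Dq <-].
  rewrite -ldivV in Dp; rewrite -Eq -ldivV in Dq.
  have [] := th_mul _ _ _ Dp Dq.
  by rewrite (mul_ldiv mulA mul1 mulV) ldivV => ? E; split; rewrite // -E Eq.
Qed.

End PartialAction.

Section Quotient.
Variables (W : topologicalType) (Dom : G -> set W) (Th : G -> W -> W -> Prop).
Local Notation R := (envR mul inv Dom Th).
Local Notation pi := (env_pi mul inv Dom Th).
Hypothesis R_equiv : Equivalence R.

Lemma env_reprK a : pi (env_repr a) = a.
Proof. by case: a => A HA; apply: eq_exist; rewrite /env_repr /=; case: cid. Qed.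

Lemma env_pi_inj p q : pi p = pi q -> R p q.
Proof.
move=> /(congr1 sval) /= E.
have : envclass mul inv Dom Th q q by exact: Equivalence_Reflexive.
by rewrite -E.
Qed.

Lemma env_pi_eq p q : R p q -> pi p = pi q.
Proof.
move=> Rpq; apply: eq_exist; apply/seteqP; split => r /= Rr.
  exact: Equivalence_Transitive (Equivalence_Symmetric _ _ Rpq) Rr.
exact: Equivalence_Transitive Rpq Rr.
Qed.

Lemma env_repr_pi p : R (env_repr (pi p)) p.
Proof. by apply: env_pi_inj; rewrite env_reprK. Qed.

Lemma env_act_pi g p : env_act mul inv Dom Th g (pi p) = pi (mul g p.1, p.2).
Proof.
apply: env_pi_eq; have := env_repr_pi p; rewrite /envR /=.
by rewrite !(ldiv_mul2l mulA mul1 mulV).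
Qed.

Lemma env_pi_continuous : continuous pi.
Proof. by apply/continuousP. Qed.

Lemma env_continuous (T : topologicalType) (f : envelope mul inv Dom Th -> T)
    (h : G * W -> T) :
  (forall p, f (pi p) = h p) -> continuous h -> continuous f.
Proof.
move=> fE /continuousP h_cont; apply/continuousP => U oU.
change (open (pi @^-1` (f @^-1` U))).
have -> : pi @^-1` (f @^-1` U) = h @^-1` U by apply/seteqP; split => p /=; rewrite fE.
exact: h_cont.
Qed.

End Quotient.

Section Map.
Variables (W W' : topologicalType).
Variables (Dom : G -> set W) (Th : G -> W -> W -> Prop).
Variables (Dom' : G -> set W') (Th' : G -> W' -> W' -> Prop).
Local Notation R := (envR mul inv Dom Th).
Local Notation R' := (envR mul inv Dom' Th').
Local Notation pi := (env_pi mul inv Dom Th).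
Local Notation pi' := (env_pi mul inv Dom' Th').
Hypotheses (R_equiv : Equivalence R) (R'_equiv : Equivalence R').
Variable phi : W -> W'.
Hypothesis phi_compat : forall p q, R p q -> R' (p.1, phi p.2) (q.1, phi q.2).

Definition env_map (a : envelope mul inv Dom Th) : envelope mul inv Dom' Th' :=
  pi' ((env_repr a).1, phi (env_repr a).2).

Lemma env_mapE p : env_map (pi p) = pi' (p.1, phi p.2).
Proof. by apply: env_pi_eq; apply: phi_compat; exact: env_repr_pi. Qed.

Lemma env_map_act g a :
  env_map (env_act mul inv Dom Th g a) = env_act mul inv Dom' Th' g (env_map a).
Proof.
by rewrite -(env_reprK a) env_act_pi // !env_mapE // env_act_pi.
Qed.

Lemma env_map_continuous : continuous phi -> continuous env_map.
Proof.
move=> phi_cont; apply: (env_continuous (h := pi' \o fun p => (p.1, phi p.2))).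
  exact: env_mapE.
move=> p; apply: continuous_comp; last exact: env_pi_continuous.
apply: cvg_pair; first exact: cvg_fst.
by apply: cvg_comp; [exact: cvg_snd | exact: phi_cont].
Qed.

End Map.
End Envelopes.

Arguments env_map {G} mul inv {W W'} Dom Th Dom' Th' phi a.

Section FunctionSpace.
Variables X Y : topologicalType.

Definition cst_Cfun (y : Y) : Cfun X Y :=
  exist _ ((fun _ : X => y) : @compact_open X Y) (mem_set (@cst_continuous X Y y)).

Definition eval_Cfun (t : X) (f : Cfun X Y) : Y := set_val f t.

Lemma eval_Cfun_continuous t : continuous (eval_Cfun t).
Proof.
apply/continuousP => O oO.
have -> : eval_Cfun t @^-1` O =
    set_val @^-1` [set g : @compact_open X Y | g @` [set t] `<=` O].
  by apply/seteqP; split => f /= => [Oft _ [s -> <-] | ]; [ | apply; exists t].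
have /continuousP : continuous (set_val : Cfun X Y -> @compact_open X Y).
  exact: initial_continuous.
by apply; apply: compact_open_open => //; exact: compact_set1.
Qed.

Lemma cst_Cfun_continuous : continuous cst_Cfun.
Proof.
apply: (@continuous_comp_initial _ _ _ (set_val : Cfun X Y -> @compact_open X Y)).
move=> y; apply/compact_open_cvgP => K O _ oO KO.
have [Oy|nOy] := pselect (O y).
  by apply: filterS (open_nbhs_nbhs (conj oO Oy)) => y' Oy' _ [k _ <-].
apply: filterE => ? ? [k Kk _]; exfalso; apply: nOy; apply: KO; by exists k.
Qed.

Lemma open_nonconstant_Cfun :
  hausdorff_space Y ->
  open [set f : Cfun X Y | exists s t, set_val f s <> set_val f t].
Proof.
rewrite open_hausdorff => Yhaus; rewrite openE => f [s [t /eqP fst]].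
have [[U V] /= [Ufs Vft] [oU oV /eqP UV0]] := Yhaus _ _ fst.
pose N := eval_Cfun s @^-1` U `&` eval_Cfun t @^-1` V.
have oN : open N.
  by apply: openI; [move: oU | move: oV]; apply: (continuousP _).1;
    exact: eval_Cfun_continuous.
apply: filterS (open_nbhs_nbhs (conj oN (conj (set_mem Ufs) (set_mem Vft)))).
move=> g [Ugs Vgt]; exists s, t => gst.
have : (U `&` V) (set_val g t) by split; rewrite // -gst.
by rewrite UV0.
Qed.

End FunctionSpace.

Section InducedAction.
Variables (G X Y : topologicalType) (mul : G -> G -> G) (inv : G -> G).
Variables (D : G -> set Y) (theta : G -> Y -> Y).
Local Notation RY := (envR mul inv D (th_graph theta)).
Local Notation RC := (envR mul inv (hat_dom X D) (hat_th X theta)).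

Lemma hat_envRE p q :
  RC p q <-> forall t, RY (p.1, set_val p.2 t) (q.1, set_val q.2 t).
Proof.
rewrite /envR /hat_dom /hat_th /th_graph /=; split.
  by move=> [Dp Th_pq] t; split; [exact: Dp | rewrite Th_pq].
by move=> R_pq; split=> t; [exact: (R_pq t).1 | rewrite (R_pq t).2].
Qed.

Lemma hat_envR_equiv : Equivalence RY -> Equivalence RC.
Proof.
move=> RY_equiv; split.
- by move=> p; apply/hat_envRE => t; reflexivity.
- by move=> p q /hat_envRE R_pq; apply/hat_envRE => t; symmetry.
- move=> p q r /hat_envRE R_pq /hat_envRE R_qr; apply/hat_envRE => t.
  exact: transitivity (R_pq t) (R_qr t).
Qed.

Lemma cst_Cfun_envR p q : RY p q -> RC (p.1, cst_Cfun X p.2) (q.1, cst_Cfun X q.2).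
Proof. by move=> R_pq; apply/hat_envRE. Qed.

Lemma eval_Cfun_envR t p q : RC p q -> RY (p.1, eval_Cfun t p.2) (q.1, eval_Cfun t q.2).
Proof. by move/hat_envRE; apply. Qed.

End InducedAction.

Section ConstantEmbedding.
Variables (G : topologicalType) (mul : G -> G -> G) (inv : G -> G) (one : G).
Hypotheses (mulA : forall a b c, mul a (mul b c) = mul (mul a b) c)
  (mul1 : forall a, mul one a = a /\ mul a one = a)
  (mulV : forall a, mul (inv a) a = one /\ mul a (inv a) = one).
Variables (Y : topologicalType) (D : G -> set Y) (theta : G -> Y -> Y).
Hypothesis RY_equiv : Equivalence (envR mul inv D (th_graph theta)).
Variables (X : topologicalType) (x0 : X).

Local Notation DC := (hat_dom X D).
Local Notation ThC := (hat_th X theta).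
Local Notation ThY := (th_graph theta).
Local Notation piC := (env_pi mul inv DC ThC).
Local Notation env_cst :=
  (env_map mul inv D ThY DC ThC (@cst_Cfun X Y)).
Local Notation env_eval :=
  (env_map mul inv DC ThC D ThY (eval_Cfun x0)).

Let RC_equiv := hat_envR_equiv X RY_equiv.
Let env_cst_compat := @cst_Cfun_envR _ X _ mul inv D theta.
Let env_eval_compat := @eval_Cfun_envR _ X _ mul inv D theta x0.
Let env_cstE := env_mapE RY_equiv RC_equiv env_cst_compat.
Let env_evalE := env_mapE RC_equiv RY_equiv env_eval_compat.
Let env_cst_act := env_map_act mulA mul1 mulV RY_equiv RC_equiv env_cst_compat.
Let env_eval_act := env_map_act mulA mul1 mulV RC_equiv RY_equiv env_eval_compat.

Lemma env_eval_cst a : env_eval (env_cst a) = a.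
Proof. by rewrite -(env_reprK a) env_cstE env_evalE; case: (env_repr a). Qed.

Lemma env_cst_eval z : range env_cst z -> env_cst (env_eval z) = z.
Proof. by move=> [a _ <-]; rewrite env_eval_cst. Qed.

Lemma preimage_env_cst_range :
  piC @^-1` range env_cst = [set q | forall s t, set_val q.2 s = set_val q.2 t].
Proof.
apply/seteqP; split => q /=.
  move=> [a _]; rewrite -(env_reprK a) env_cstE.
  move=> /(env_pi_inj RC_equiv) /hat_envRE R_aq s t /=.
  by move: (R_aq s).2 (R_aq t).2; rewrite /th_graph /= => <- <-.
move=> q_cst; exists (env_pi mul inv D ThY (q.1, set_val q.2 x0)) => //.
rewrite env_cstE; apply: (env_pi_eq RC_equiv); apply/hat_envRE => t /=.
by rewrite (q_cst x0 t); reflexivity.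
Qed.

Lemma closed_env_cst_range : hausdorff_space Y -> closed (range env_cst).
Proof.
move=> Yhaus; rewrite -[range _]setCK; apply: open_closedC.
change (open (piC @^-1` ~` range env_cst)).
rewrite -preimage_setC preimage_env_cst_range.
have -> : ~` [set q : G * Cfun X Y | forall s t, set_val q.2 s = set_val q.2 t] =
    snd @^-1` [set f | exists s t, set_val f s <> set_val f t].
  apply/seteqP; split => q /=.
    by move=> /existsNP [s /existsNP [t]]; exists s, t.
  by move=> [s [t ne]] q_cst; exact: ne.
have /continuousP snd_cont : continuous (@snd G (Cfun X Y)) by move=> q; exact: cvg_snd.
by apply: snd_cont; exact: open_nonconstant_Cfun.
Qed.

Lemma G_invariant_env_cst_range : G_invariant (env_act mul inv DC ThC) (range env_cst).
Proof. exact: G_invariant_range env_cst_act. Qed.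

Lemma G_homeomorphic_env_cst_range :
  G_homeomorphic_to_subset (env_act mul inv D ThY) (env_act mul inv DC ThC)
    (range env_cst).
Proof.
exists env_cst, env_eval; split.
- by split=> a; [exists a | exact: env_eval_cst].
- exact: env_cst_eval.
- apply: (env_map_continuous RY_equiv RC_equiv env_cst_compat).
  exact: cst_Cfun_continuous.
- apply: continuous_subspaceT.
  apply: (env_map_continuous RC_equiv RY_equiv env_eval_compat).
  exact: eval_Cfun_continuous.
- by split=> [g a | g z _]; [exact: env_cst_act | exact: env_eval_act].
Qed.

End ConstantEmbedding.

Theorem lemma3p4
  (G : topologicalType) (mul : G -> G -> G) (inv : G -> G) (one : G)
  (HG : is_topological_group mul inv one) (HGhaus : hausdorff_space G)
  (Y : topologicalType) (D : G -> set Y) (theta : G -> Y -> Y)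
  (Htheta : is_top_partial_action mul inv one D theta)
  (X : topologicalType) (Xne : inhabited X) (Xcpt : compact [set: X]) :
  exists Z : set (envelope mul inv (hat_dom X D) (hat_th X theta)),
    [/\ G_invariant (env_act mul inv (hat_dom X D) (hat_th X theta)) Z,
        G_homeomorphic_to_subset
          (env_act mul inv D (th_graph theta))
          (env_act mul inv (hat_dom X D) (hat_th X theta)) Z &
        (hausdorff_space Y -> closed Z)].
Proof.
have [x0] := Xne; have [mulA mul1 mulV _ _] := HG.
have RY_equiv := th_envR_equiv mulA mul1 mulV Htheta.
exists (range (env_map mul inv D (th_graph theta) (hat_dom X D) (hat_th X theta)
  (@cst_Cfun X Y))); split.
- exact: G_invariant_env_cst_range.
- exact: G_homeomorphic_env_cst_range x0.
- exact: closed_env_cst_range.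
Qed.
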